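(* Let $m\ge 2$, let $A$ be a real diagonal $n\times n$ matrix with $\|A\|=1$, and let $A_2,\dots,A_m$ be real symmetric $n\times n$ matrices such that $\langle A_\alpha,A_\beta\rangle=0$ for $\alpha\neq\beta$ and $\|A_2\|\geq\cdots\geq\|A_m\|$. Then \[ \sum_{\alpha=2}^m\|[A,A_\alpha]\|^2\leq \sum_{\alpha=2}^m\|A_\alpha\|^2+\|A_2\|^2 . \]
   Context: $\langle A,B\rangle=\sum_{i,j}a_{ij}b_{ij}$ is the Frobenius inner product, $\|A\|^2=\langle A,A\rangle$, and $[A,B]=AB-BA$. *)

From HB Require Import structures.
From mathcomp Require Import all_boot all_order all_algebra.
From mathcomp Require Import reals.
Set Implicit Arguments. Unset Strict Implicit. Unset Printing Implicit Defensive.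
Import Order.TTheory GRing.Theory Num.Theory.
Local Open Scope ring_scope.

Definition frob (R : realType) (n : nat) (A B : 'M[R]_n) : R :=
  \sum_(i < n) \sum_(j < n) A i j * B i j.

Definition fnorm (R : realType) (n : nat) (A : 'M[R]_n) : R :=
  Num.sqrt (frob A A).

Definition commut (R : realType) (n : nat) (A B : 'M[R]_n) : 'M[R]_n :=
  A *m B - B *m A.

From HB Require Import structures.
From mathcomp Require Import all_boot all_order all_algebra.
From mathcomp Require Import reals.
From mathcomp Require Import ring lra.

(** For a diagonal [A = diag d] one has [[A, B]_ij = (d_i - d_j) B_ij], so the
    left-hand side is the quadratic form [sum_ij (d_i - d_j)^2 w_ij] of the graph
    Laplacian with weights [w_ij = sum_a (A_a)_ij^2] ([i <> j]).  Testing the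
    orthogonal family [A_a] against [E_ij + E_ji] with Bessel's inequality gives
    [2 w_ij <= ||A_2||^2], hence the row sums satisfy
    [2 (R_i + R_j) <= sum w + 2 w_ij <= sum_a ||A_a||^2 + ||A_2||^2] for [i <> j].
    The Anderson-Morley bound [lambda_max <= max_(i <> j) (R_i + R_j)] for the
    Laplacian, proved through
    [(d_i - d_j)^2 <= (R_i + R_j) (d_i^2 / R_i + d_j^2 / R_j)], concludes. *)

Set Implicit Arguments. Unset Strict Implicit.
Import Order.TTheory GRing.Theory Num.Theory.
Local Open Scope ring_scope.

Section Frobenius.
Context {R : realType} {n : nat}.
Implicit Types (A B C X Y : 'M[R]_n).

Lemma frobC A B : frob A B = frob B A.
Proof. by apply: eq_bigr => i _; apply: eq_bigr => j _; rewrite mulrC. Qed.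

Lemma frobDl A B C : frob (A + B) C = frob A C + frob B C.
Proof.
rewrite /frob -big_split; apply: eq_bigr => i _; rewrite -big_split.
by apply: eq_bigr => j _; rewrite !mxE mulrDl.
Qed.

Lemma frobZl a A C : frob (a *: A) C = a * frob A C.
Proof.
rewrite /frob mulr_sumr; apply: eq_bigr => i _; rewrite mulr_sumr.
by apply: eq_bigr => j _; rewrite !mxE mulrA.
Qed.

Lemma frobNl A C : frob (- A) C = - frob A C.
Proof. by rewrite -scaleN1r frobZl mulN1r. Qed.

Lemma frob0l C : frob 0 C = 0.
Proof. by rewrite -(scale0r 0) frobZl mul0r. Qed.

Lemma frob_suml (I : Type) (r : seq I) (F : I -> 'M[R]_n) C :
  frob (\sum_(a <- r) F a) C = \sum_(a <- r) frob (F a) C.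
Proof.
elim: r => [|a r IHr]; first by rewrite !big_nil frob0l.
by rewrite !big_cons frobDl IHr.
Qed.

Lemma frob_sumr (I : Type) (r : seq I) (F : I -> 'M[R]_n) C :
  frob C (\sum_(a <- r) F a) = \sum_(a <- r) frob C (F a).
Proof. by rewrite frobC frob_suml; apply: eq_bigr => a _; rewrite frobC. Qed.

Lemma frobDr A B C : frob C (A + B) = frob C A + frob C B.
Proof. by rewrite frobC frobDl !(frobC C). Qed.

Lemma frobNr A C : frob C (- A) = - frob C A.
Proof. by rewrite frobC frobNl frobC. Qed.

Lemma frobZr a A C : frob C (a *: A) = a * frob C A.
Proof. by rewrite frobC frobZl frobC. Qed.

Lemma frobxx A : frob A A = \sum_i \sum_j A i j ^+ 2.
Proof. by apply: eq_bigr => i _; apply: eq_bigr => j _; rewrite expr2. Qed.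

Lemma frobxx_ge0 A : 0 <= frob A A.
Proof. by rewrite frobxx; do 2![apply: sumr_ge0 => ? _]; apply: sqr_ge0. Qed.

Lemma frobxx_eq0 A : (frob A A == 0) = (A == 0).
Proof.
apply/idP/eqP => [|->]; last by rewrite frob0l.
rewrite frobxx psumr_eq0 => [/allP A0|i _]; last first.
  by apply: sumr_ge0 => j _; apply: sqr_ge0.
apply/matrixP => i j; have /implyP/(_ isT) := A0 i (mem_index_enum i).
rewrite psumr_eq0 => [/allP/(_ j (mem_index_enum j))|k _]; last exact: sqr_ge0.
by rewrite mxE sqrf_eq0 => /eqP.
Qed.

Lemma frob_CauchySchwarz X Y : frob X Y ^+ 2 <= frob X X * frob Y Y.
Proof.
have [->|X0] := eqVneq X 0; first by rewrite !frob0l expr0n mul0r.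
have eX : 0 < frob X X by rewrite lt_def frobxx_eq0 X0 frobxx_ge0.
have := frobxx_ge0 (frob X X *: Y - frob X Y *: X).
rewrite !(frobDl, frobNl, frobZl, frobDr, frobNr, frobZr) (frobC Y X).
move: eX; set e := frob X X; set c := frob X Y; set f := frob Y Y; nra.
Qed.

Lemma sqr_fnorm A : fnorm A ^+ 2 = frob A A.
Proof. by rewrite sqr_sqrtr // frobxx_ge0. Qed.

Lemma fnorm_ge0 A : 0 <= fnorm A.
Proof. exact: sqrtr_ge0. Qed.

Lemma frob_bessel (I : eqType) (r : seq I) (B : I -> 'M[R]_n) (L : R) E :
  uniq r -> {in r &, forall a b, a != b -> frob (B a) (B b) = 0} ->
  {in r, forall a, frob (B a) (B a) <= L} -> 0 <= L ->
  \sum_(a <- r) frob E (B a) ^+ 2 <= L * frob E E.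
Proof.
move=> r_uniq B_orth B_le L_ge0.
set t := \sum_(a <- r) _.
(* Cauchy-Schwarz against [M], whose norm orthogonality keeps below [L * t]. *)
pose M := \sum_(a <- r) frob E (B a) *: B a.
have EM : frob E M = t.
  by rewrite frob_sumr; apply: eq_bigr => a _; rewrite frobZr expr2.
have MM : frob M M <= L * t.
  rewrite frob_suml mulr_sumr !big_seq; apply: ler_sum => a ar.
  rewrite frobZl frob_sumr (bigD1_seq a) //= big1_seq ?addr0 => [|b /andP[ba br]].
    by rewrite frobZr mulrA -expr2 mulrC ler_wpM2r ?sqr_ge0 ?B_le.
  by rewrite frobZr B_orth ?mulr0 // eq_sym.
have t_ge0 : 0 <= t by apply: sumr_ge0 => a _; apply: sqr_ge0.
have CS : t * t <= t * (L * frob E E).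
  rewrite -expr2 -{1}EM (le_trans (frob_CauchySchwarz E M)) //.
  by rewrite mulrCA mulrC mulrA; apply: ler_wpM2r; rewrite ?frobxx_ge0.
have [->|t_neq0] := eqVneq t 0; first by rewrite mulr_ge0 ?frobxx_ge0.
by rewrite -(ler_pM2l (_ : 0 < t)) // lt_def t_neq0.
Qed.

End Frobenius.

Lemma Titu_sqrrB {R : realFieldType} (a b x y : R) : 0 < x -> 0 < y ->
  (a - b) ^+ 2 <= (x + y) * (a ^+ 2 / x + b ^+ 2 / y).
Proof.
move=> x_gt0 y_gt0; rewrite -subr_ge0.
have -> : (x + y) * (a ^+ 2 / x + b ^+ 2 / y) - (a - b) ^+ 2 =
          (a * y + b * x) ^+ 2 / (x * y) by field; rewrite ?gt_eqF.
by rewrite divr_ge0 ?sqr_ge0 // ltW // mulr_gt0.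
Qed.

Section SymmetricWeights.
Context {R : realFieldType} {T : finType}.
Variable w : T -> T -> R.
Hypothesis w_sym : forall i j, w i j = w j i.
Hypothesis w_ge0 : forall i j, 0 <= w i j.

Lemma row_sums_pair_le i j : (forall k, w k k = 0) -> i != j ->
  2 * (\sum_k w i k + \sum_k w j k) <= \sum_a \sum_b w a b + 2 * w i j.
Proof.
move=> w_diag ij; pose p k := ((k == i) || (k == j))%:R : R.
have sum_p (F : T -> R) : \sum_k p k * F k = F i + F j.
  rewrite (bigD1 i) // (bigD1 j) 1?eq_sym //= big1 => [|k /andP[ki kj]].
    by rewrite /p !eqxx orbT /= !mul1r addr0.
  by rewrite /p (negPf ki) (negPf kj) mul0r.
have rows : \sum_k w i k + \sum_k w j k = \sum_a \sum_b p a * w a b.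
  rewrite -(sum_p (fun a => \sum_b w a b)).
  by apply: eq_bigr => a _; rewrite mulr_sumr.
have cols : \sum_k w i k + \sum_k w j k = \sum_a \sum_b p b * w a b.
  rewrite exchange_big -(sum_p (fun b => \sum_a w b a)).
  by apply: eq_bigr => b _; rewrite mulr_sumr; apply: eq_bigr => a _; rewrite w_sym.
have pp : \sum_a \sum_b p a * (p b * w a b) = 2 * w i j.
  under eq_bigr do rewrite -mulr_sumr sum_p.
  by rewrite sum_p !w_diag (w_sym j i); ring.
(* An entry in rows or columns [i], [j] is counted at most twice, and twice
   only when it lies in both, i.e. for [w i j] and [w j i]. *)
rewrite mulr2n mulrDl mul1r {1}rows cols -big_split -pp -big_split /=.
apply: ler_sum => a _; rewrite -big_split -big_split /=; apply: ler_sum => b _.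
have := w_ge0 a b; rewrite /p.
by case: (_ || _); case: (_ || _); rewrite /= ?mul0r ?mul1r; lra.
Qed.

Lemma laplacian_form_le (d : T -> R) (K : R) : 0 <= K ->
  (forall i j, i != j -> \sum_k w i k + \sum_k w j k <= K) ->
  \sum_i \sum_j (d i - d j) ^+ 2 * w i j <= 2 * K * \sum_i d i ^+ 2.
Proof.
move=> K_ge0 rows_le; pose rs i := \sum_k w i k.
have w_le_rs i j : w i j <= rs i by rewrite /rs (bigD1 j) //= lerDl sumr_ge0.
have c_ge0 i : 0 <= d i ^+ 2 / rs i by rewrite divr_ge0 ?sqr_ge0 ?sumr_ge0.
have term_le i j : (d i - d j) ^+ 2 * w i j <=
    K * (w i j * (d i ^+ 2 / rs i) + w i j * (d j ^+ 2 / rs j)).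
  have [<-|ij] := eqVneq i j.
    rewrite subrr expr0n mul0r.
    by apply: mulr_ge0 => //; apply: addr_ge0; apply: mulr_ge0.
  have [->|w_neq0] := eqVneq (w i j) 0; first by rewrite !(mulr0, mul0r, addr0).
  have w_gt0 : 0 < w i j by rewrite lt_def w_neq0 w_ge0.
  have rsi_gt0 : 0 < rs i := lt_le_trans w_gt0 (w_le_rs i j).
  have rsj_gt0 : 0 < rs j.
    by rewrite w_sym in w_gt0; apply: lt_le_trans w_gt0 (w_le_rs j i).
  rewrite -mulrDr mulrCA [leRHS]mulrC; apply: ler_wpM2r => //.
  apply: le_trans (Titu_sqrrB (d i) (d j) rsi_gt0 rsj_gt0) _.
  by apply: ler_wpM2r; rewrite ?addr_ge0 ?rows_le.
have row_le i : \sum_j w i j * (d i ^+ 2 / rs i) <= d i ^+ 2.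
  rewrite -mulr_suml -/(rs i) mulrC.
  by have [->|rs_neq0] := eqVneq (rs i) 0; rewrite ?mulr0 ?sqr_ge0 ?divfK.
apply: le_trans (ler_sum _ (fun i _ => ler_sum _ (fun j _ => term_le i j))) _.
under eq_bigr do rewrite -mulr_sumr big_split /=.
rewrite -mulr_sumr big_split /= [X in _ + X]exchange_big /= -mulrA.
rewrite mulr2n mulrDl mul1r -mulrDr ler_wpM2l // lerD // ler_sum // => j _.
by under eq_bigr do rewrite w_sym; apply: row_le.
Qed.

End SymmetricWeights.

Section DiagonalCommutator.
Context {R : realType} {n : nat}.
Implicit Types (A B : 'M[R]_n).

Lemma frob_delta i j B : frob (delta_mx i j) B = B i j.
Proof.
rewrite /frob (bigD1 i) //= addrC big1 ?add0r => [|k /negPf ki]; last first.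
  by rewrite big1 // => l _; rewrite mxE ki mul0r.
rewrite (bigD1 j) //= addrC big1 ?add0r => [|l /negPf lj]; last first.
  by rewrite mxE lj andbF mul0r.
by rewrite mxE !eqxx mul1r.
Qed.

Lemma frob_diag A : is_diag_mx A -> frob A A = \sum_i A i i ^+ 2.
Proof.
move=> /is_diag_mxP A_diag; apply: eq_bigr => i _.
rewrite (bigD1 i) //= big1 ?addr0 ?expr2 // => k ki.
by rewrite A_diag ?mul0r // eq_sym.
Qed.

Lemma commut_diagE A B i j : is_diag_mx A ->
  commut A B i j = (A i i - A j j) * B i j.
Proof.
move=> /is_diag_mxP A_diag.
have AB : (A *m B) i j = A i i * B i j.
  rewrite mxE (bigD1 i) //= big1 ?addr0 // => k ki.
  by rewrite A_diag ?mul0r // eq_sym.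
have BA : (B *m A) i j = B i j * A j j.
  by rewrite mxE (bigD1 j) //= big1 ?addr0 // => k kj; rewrite A_diag ?mulr0.
by rewrite [LHS]mxE AB [X in _ + X]mxE BA mulrBl [A j j * _]mulrC [A i i * _]mulrC.
Qed.

Lemma sqr_fnorm_commut_diag A B : is_diag_mx A ->
  fnorm (commut A B) ^+ 2 = \sum_i \sum_j (A i i - A j j) ^+ 2 * B i j ^+ 2.
Proof.
move=> A_diag; rewrite sqr_fnorm frobxx.
by do 2![apply: eq_bigr => ? _]; rewrite commut_diagE // exprMn.
Qed.

Lemma sum_sqr_offdiag_le (I : eqType) (r : seq I) (B : I -> 'M[R]_n) (L : R) i j :
  uniq r -> {in r, forall a, (B a)^T = B a} ->
  {in r &, forall a b, a != b -> frob (B a) (B b) = 0} ->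
  {in r, forall a, frob (B a) (B a) <= L} -> 0 <= L -> i != j ->
  2 * \sum_(a <- r) B a i j ^+ 2 <= L.
Proof.
move=> r_uniq B_sym B_orth B_le L_ge0 ij.
(* [frob E C = C i j + C j i], which is [2 * C i j] for symmetric [C]. *)
pose E := delta_mx i j + delta_mx j i : 'M[R]_n.
have EE : frob E E = 2.
  rewrite frobDl !frob_delta !mxE !eqxx /= (negPf ij) eq_sym (negPf ij) /=.
  by rewrite addr0 add0r.
have double (x : R) : (x + x) ^+ 2 = 4 * x ^+ 2 by ring.
have := frob_bessel E r_uniq B_orth B_le L_ge0.
rewrite EE big_seq (eq_bigr (fun a => 4 * B a i j ^+ 2)) => [|a ar]; last first.
  by rewrite frobDl !frob_delta -{2}(B_sym a ar) mxE double.
rewrite -big_seq -mulr_sumr; lra.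
Qed.

End DiagonalCommutator.

Section OffDiagonalMass.
Context {R : realType} {n : nat} {I : eqType}.
Variables (r : seq I) (B : I -> 'M[R]_n).

Definition offdiag_mass i j : R :=
  if i == j then 0 else \sum_(a <- r) B a i j ^+ 2.

Lemma offdiag_mass_ge0 i j : 0 <= offdiag_mass i j.
Proof.
by rewrite /offdiag_mass; case: eqP => // _; apply: sumr_ge0 => a _; apply: sqr_ge0.
Qed.

Lemma offdiag_mass_diag i : offdiag_mass i i = 0.
Proof. by rewrite /offdiag_mass eqxx. Qed.

Lemma sum_offdiag_mass_le :
  \sum_i \sum_j offdiag_mass i j <= \sum_(a <- r) fnorm (B a) ^+ 2.
Proof.
under [leRHS]eq_bigr do rewrite sqr_fnorm frobxx.
rewrite [leRHS]exchange_big; apply: ler_sum => i _; rewrite [leRHS]exchange_big.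
apply: ler_sum => j _; rewrite /offdiag_mass; case: eqP => // _.
by apply: sumr_ge0 => a _; apply: sqr_ge0.
Qed.

Lemma sum_sqr_fnorm_commut_diag A : is_diag_mx A ->
  \sum_(a <- r) fnorm (commut A (B a)) ^+ 2 =
  \sum_i \sum_j (A i i - A j j) ^+ 2 * offdiag_mass i j.
Proof.
move=> A_diag; under eq_bigr do rewrite sqr_fnorm_commut_diag //.
rewrite exchange_big; apply: eq_bigr => i _; rewrite exchange_big.
apply: eq_bigr => j _; rewrite /offdiag_mass; case: eqVneq => [->|_].
  by rewrite subrr expr0n mul0r big1 // => a _; rewrite mul0r.
by rewrite mulr_sumr.
Qed.

Hypothesis B_sym : {in r, forall a, (B a)^T = B a}.

Lemma offdiag_mass_sym i j : offdiag_mass i j = offdiag_mass j i.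
Proof.
rewrite /offdiag_mass eq_sym; case: eqP => // _; rewrite !big_seq.
by apply: eq_bigr => a ar; rewrite -{1}(B_sym ar) mxE.
Qed.

Lemma sum_sqr_fnorm_commut_diag_le A (L : R) : uniq r ->
  {in r &, forall a b, a != b -> frob (B a) (B b) = 0} ->
  {in r, forall a, frob (B a) (B a) <= L} -> 0 <= L -> is_diag_mx A ->
  \sum_(a <- r) fnorm (commut A (B a)) ^+ 2 <=
  (\sum_(a <- r) fnorm (B a) ^+ 2 + L) * fnorm A ^+ 2.
Proof.
move=> r_uniq B_orth B_le L_ge0 A_diag.
set S := \sum_(a <- r) fnorm (B a) ^+ 2.
have S_ge0 : 0 <= S by apply: sumr_ge0 => a _; apply: sqr_ge0.
rewrite sum_sqr_fnorm_commut_diag // sqr_fnorm frob_diag //.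
rewrite -[S + L](@divfK _ 2) ?pnatr_eq0 //.
rewrite [_ / 2 * 2]mulrC; apply: laplacian_form_le.
- exact: offdiag_mass_sym.
- exact: offdiag_mass_ge0.
- by rewrite divr_ge0 ?addr_ge0.
- move=> i j ij; rewrite ler_pdivlMr // mulrC.
  have := row_sums_pair_le offdiag_mass_sym offdiag_mass_ge0 offdiag_mass_diag ij.
  move/le_trans; apply; rewrite lerD ?sum_offdiag_mass_le //.
  by rewrite /offdiag_mass (negPf ij) sum_sqr_offdiag_le.
Qed.

End OffDiagonalMass.

Theorem mainTheorem5 (R : realType) (n m : nat) (A : 'M[R]_n)
  (As : nat -> 'M[R]_n) :
  (2 <= m)%N ->
  is_diag_mx A ->
  fnorm A = 1 ->
  (forall a : nat, (2 <= a <= m)%N -> (As a)^T = As a) ->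
  (forall a b : nat, (2 <= a <= m)%N -> (2 <= b <= m)%N -> a <> b ->
     frob (As a) (As b) = 0) ->
  (forall a b : nat, (2 <= a)%N -> (a <= b <= m)%N ->
     fnorm (As b) <= fnorm (As a)) ->
  \sum_(2 <= a < m.+1) fnorm (commut A (As a)) ^+ 2
    <= \sum_(2 <= a < m.+1) fnorm (As a) ^+ 2 + fnorm (As 2%N) ^+ 2.
Proof.
move=> _ A_diag A_norm As_sym As_orth As_dec.
have mem_r a : (a \in index_iota 2 m.+1) = (2 <= a <= m)%N.
  by rewrite mem_index_iota ltnS.
rewrite -[leRHS]mulr1 -(expr1n _ 2) -A_norm; apply: sum_sqr_fnorm_commut_diag_le => //.
- by move=> a; rewrite mem_r; apply: As_sym.
- exact: iota_uniq.
- by move=> a b; rewrite !mem_r => ? ? /eqP; apply: As_orth.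
- move=> a; rewrite mem_r -sqr_fnorm => /andP[a_ge2 a_le_m].
  by rewrite ler_sqr ?nnegrE ?fnorm_ge0 ?As_dec ?a_ge2.
- exact: sqr_ge0.
Qed.
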